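(* Let $\Gamma=(V,E)$ be a connected graph of valency at least $3$, $G\leqslant\mathrm{Aut}(\Gamma)$, and assume $\Gamma$ is $(G,2)$-arc-transitive. Let $G^*=\langle G_{\alpha_1},G_{\alpha_2}\rangle$ for some $\{\alpha_1,\alpha_2\}\in E$ and $M=\mathrm{soc}(G^* )$, and assume $G^*$ is a quasiprimitive group of PA type on each of its orbits on $V$, so that $M=T_1\times\cdots\times T_n$ is the unique minimal normal subgroup of $G^*$, with $n\geqslant2$ and the $T_i$ pairwise isomorphic nonabelian simple groups, and for each $\alpha\in V$ there are subgroups $R_i<T_i$ with $M_\alpha\leqslant R_1\times\cdots\times R_n$ such that every projection $\pi_i:M_\alpha\to R_i$ is surjective. For $1\leqslant i\leqslant n$ let $N_i=\prod_{j\ne i}T_j$. Then every $N_i$ is intransitive on each of the $M$-orbits on $V$.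
   Context: Graphs are finite, simple and undirected; $G_\alpha$ is a vertex stabilizer. A $2$-arc is a triple $(\alpha,\beta,\gamma)$ of distinct vertices with $\{\alpha,\beta\},\{\beta,\gamma\}\in E$, and $(G,2)$-arc-transitive means $G$ is transitive on $2$-arcs. A permutation group is quasiprimitive if each minimal normal subgroup is transitive. $\mathrm{soc}(X)$ is the subgroup generated by all minimal normal subgroups of $X$. *)

From mathcomp Require Import all_boot all_fingroup all_solvable.
Set Implicit Arguments. Unset Strict Implicit. Unset Printing Implicit Defensive.
Import GroupScope.

Definition graph_aut (V : finType) (e : rel V) : {set {perm V}} :=
  [set g : {perm V} | [forall x, forall y, e (g x) (g y) == e x y]].

Definition two_arc (V : finType) (e : rel V) (a b c : V) : bool :=
  [&& a != b, b != c, a != c, e a b & e b c].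

Definition two_arc_transitive (V : finType) (G : {set {perm V}}) (e : rel V) :=
  forall a b c a' b' c', two_arc e a b c -> two_arc e a' b' c' ->
    exists2 g, g \in G & [/\ g a = a', g b = b' & g c = c'].

Definition minnormal_sub (gT : finGroupType) (H G : {set gT}) : bool :=
  (H <| G) && minnormal H G.

Definition soc (gT : finGroupType) (G : {set gT}) : {set gT} :=
  << \bigcup_(H : {group gT} | minnormal_sub H G) H >>.

Definition gstar (V : finType) (G : {set {perm V}}) (a1 a2 : V) : {set {perm V}} :=
  << 'C_G[a1 | 'P] :|: 'C_G[a2 | 'P] >>.

Definition quasiprim_on (V : finType) (G : {set {perm V}}) (D : {set V}) : Prop :=
  [transitive G, on D | 'P] /\
  forall K : {group {perm V}}, K <| G ->
    K \subset 'C(D | 'P) \/ [transitive K, on D | 'P].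

Definition Ncomp (gT : finGroupType) (n : nat) (T : 'I_n -> {group gT}) (i : 'I_n)
  : {set gT} := << \bigcup_(j | j != i) T j >>.

Definition proj_img (gT : finGroupType) (n : nat) (T : 'I_n -> {group gT}) (i : 'I_n)
  (A : {set gT}) : {set gT} := [set divgr (T i) (Ncomp T i) x | x in A].

(* If the partial product N_i were transitive on the M-orbit of x, the
   Frattini-type factorisation M = M_x N_i would hold; projecting onto the
   factor T_i of M = T_i x N_i kills N_i, so M_x would project onto all of
   T_i, contradicting that its projection R_i is proper. *)

From mathcomp Require Import all_boot all_fingroup all_solvable.
Set Implicit Arguments.
Unset Strict Implicit.
Unset Printing Implicit Defensive.
Import GroupScope.

Canonical soc_group (gT : finGroupType) (G : {set gT}) : {group gT} :=
  Eval hnf in [group of soc G].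

Canonical Ncomp_group (gT : finGroupType) n (T : 'I_n -> {group gT}) i
  : {group gT} := Eval hnf in [group of Ncomp T i].

Lemma Ncomp_dprod (gT : finGroupType) n (T : 'I_n -> {group gT})
    (M : {group gT}) i :
  \big[dprod/1]_(j < n) T j = M -> T i \x Ncomp T i = M.
Proof.
rewrite (bigD1 i) //= => defM.
have [[_ N _ defN] _ _ _] := dprodP defM.
by rewrite /Ncomp (bigdprodWY defN) -defN.
Qed.

Lemma divgr_astab1_transitive (gT : finGroupType) (rT : finType)
    (to : {action gT &-> rT}) (K H G : {group gT}) x :
  K \x H = G -> [transitive H, on orbit to G x | to] ->
  divgr K H @: 'C_G[x | to] = K.
Proof.
move=> /dprodP[_ defG _ tiKH] trH.
have sHG : H \subset G by rewrite -defG mulG_subr.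
have defGx : 'C_G[x | to] * H = G.
  exact/(subgroup_transitiveP (orbit_refl _ G x) sHG (atrans_orbit _ G x)).
apply/eqP; rewrite eqEsubset; apply/andP; split; apply/subsetP.
  by move=> _ /imsetP[y /setIP[Gy _] ->]; rewrite mem_divgr ?defG.
move=> k Kk; have : k \in 'C_G[x | to] * H.
  by rewrite defGx -defG (subsetP (mulG_subl H K)).
case/mulsgP=> y h Gxy Hh def_k; apply/imsetP; exists y => //.
by rewrite -(mulgK h y) -def_k (divgrMid tiKH) ?groupV.
Qed.

Theorem lemma4p1 (V : finType) (e : rel V) (G : {group {perm V}}) (a1 a2 : V)
  (n : nat) (T : 'I_n -> {group {perm V}}) :
  symmetric e -> irreflexive e ->
  (forall x y, connect e x y) ->
  (exists2 k, 3 <= k & forall x, #|[set y | e x y]| = k) ->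
  G \subset graph_aut e -> two_arc_transitive G e -> e a1 a2 ->
  let Gs := gstar G a1 a2 in
  let M := soc Gs in
  (forall x, quasiprim_on Gs (orbit 'P Gs x)) ->
  minnormal_sub M Gs ->
  (forall H : {group {perm V}}, minnormal_sub H Gs -> H :=: M) ->
  2 <= n ->
  \big[dprod/1]_(i < n) T i = M ->
  (forall i, simple (T i) /\ ~~ abelian (T i)) ->
  (forall i j, T i \isog T j) ->
  (forall x : V, exists R : 'I_n -> {group {perm V}},
      [/\ forall i, R i \proper T i,
          'C_M[x | 'P] \subset \prod_(i < n) R i &
          forall i, proj_img T i 'C_M[x | 'P] = R i]) ->
  forall (i : 'I_n) (x : V), ~~ [transitive Ncomp T i, on orbit 'P M x | 'P].
Proof.
move=> _ _ _ _ _ _ _ Gs M _ _ _ _ defM _ _ stabM i x; apply/negP => trN.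
have [R [ltRT _ projR]] := stabM x.
have := ltRT i; rewrite -projR /proj_img.
by rewrite (divgr_astab1_transitive (Ncomp_dprod i defM) trN) properxx.
Qed.
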